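(* Let $t\ge1$. \begin{enumerate} \item If the minimal hyperbinary expansion of $n$ is $1^t2$, then $A(n)$ is the directed path graph \[1^t2\twoheadrightarrow 1^{t-1}20\twoheadrightarrow\cdots\twoheadrightarrow 20^t\to 10^{t+1}.\] \item If the minimal hyperbinary expansion of $n$ is $2^t$, then $A(n)$ is the directed path graph \[2^t\to 102^{t-1}\to 1102^{t-2}\to\cdots\to 1^t0.\] \end{enumerate} Here each arrow is an arc with the indicated label, and there are no other vertices or arcs.
   Context: A hyperbinary expansion of a nonnegative integer $n$ is a word $x_0\cdots x_k$ over $\{0,1,2\}$ with $x_0\ne0$ and $\sum_i x_i2^{k-i}=n$. $\mathcal H(n)$ is the set of such expansions. $A(n)$ is the directed graph on $\mathcal H(n)$ with the following labeled arcs, for arbitrary words $\mathbf x,\mathbf y$ over $\{0,1,2\}$ whenever both endpoints lie in $\mathcal H(n)$: \begin{itemize} \item an arc labeled $\to$ from $\mathbf x02\mathbf y$ to $\mathbf x10\mathbf y$ and from $2\mathbf y$ to $10\mathbf y$; \item an arc labeled $\twoheadrightarrow$ from $\mathbf x12\mathbf y$ to $\mathbf x20\mathbf y$. \end{itemize} The minimal hyperbinary expansion of $n$ is its unique hyperbinary expansion containing no digit $0$. Exponents denote repetition of a letter, e.g. $1^t=1\cdots1$ ($t$ times). *)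

(* Words over {0,1,2} are represented as seq nat whose
   entries are all < 3; the first letter x_0 is the head of the list. *)
From mathcomp Require Import all_boot.
Set Implicit Arguments. Unset Strict Implicit. Unset Printing Implicit Defensive.

Definition hb_value (w : seq nat) : nat := foldl (fun a d => a.*2 + d) 0 w.

Definition hyperbinary (n : nat) (w : seq nat) : Prop :=
  [/\ all (fun d => d < 3) w, head 0 w != 0 & hb_value w = n].

Definition minimal_hyperbinary (n : nat) (w : seq nat) : Prop :=
  hyperbinary n w /\ 0 \notin w.

(* arc labels:  Arr = "->",  DArr = "->>" *)
Inductive arc_label := Arr | DArr.

Definition arcA (n : nat) (l : arc_label) (u v : seq nat) : Prop :=
  [/\ hyperbinary n u, hyperbinary n v &
   match l with
   | Arr => (exists x y : seq nat, u = x ++ [:: 0; 2] ++ y /\ v = x ++ [:: 1; 0] ++ y)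
            \/ (exists y : seq nat, u = 2 :: y /\ v = [:: 1; 0] ++ y)
   | DArr => exists x y : seq nat, u = x ++ [:: 1; 2] ++ y /\ v = x ++ [:: 2; 0] ++ y
   end].

Definition A_is_path (n : nat) (vs : seq (seq nat)) (ls : seq arc_label) : Prop :=
  [/\ size vs = (size ls).+1, uniq vs,
      (forall w, hyperbinary n w <-> w \in vs) &
      (forall l u v, arcA n l u v <->
         exists2 i, i < size ls &
           [/\ l = nth Arr ls i, u = nth [::] vs i & v = nth [::] vs i.+1])].

From mathcomp Require Import all_boot zify.
Set Implicit Arguments. Unset Strict Implicit. Unset Printing Implicit Defensive.

(** Removing the last digit [d] of an expansion of [n] leaves an expansion of
    [(n - d) / 2], and the parity of [n] leaves at most two choices for [d].
    By induction on the length, [2^k - 1] has the single expansion [1^k],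
    [2^m] has the expansions [1^a 2 0^b] ([a + b + 1 = m]) and [1 0^m], and
    [2^(k+1) - 2] has the expansions [2^k] and [1^a 0 2^b] ([0 < a], [a + b = k]).
    In each of these words the letter 2, resp. 0, occurs once, which pins down
    the only factor an arc can rewrite: every vertex but the last has exactly one
    outgoing arc, and it leads to the next word of the list. *)

Lemma rcons_nseq (T : Type) n (x : T) : rcons (nseq n x) x = nseq n.+1 x.
Proof. by rewrite -cats1 -addn1 nseqD. Qed.

Lemma eq_cat_cons_notin (T : eqType) (e : T) x y x' y' :
  e \notin x' -> e \notin y' -> x ++ e :: y = x' ++ e :: y' -> x = x' /\ y = y'.
Proof.
move=> ex' ey' E.
have ex : e \notin x.
  apply/count_memPn; move: (congr1 (count_mem e) E).
  by rewrite !count_cat /= eqxx (count_memPn ex') (count_memPn ey'); lia.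
have size_x : size x = size x'.
  by move: (congr1 (index e) E); rewrite !index_cat (negbTE ex) (negbTE ex') /= eqxx !addn0.
by move/eqP: E; rewrite eqseq_cat // => /andP [/eqP -> /eqP [->]].
Qed.

Lemma notin_nseq (T : eqType) (c e : T) k : c != e -> e \notin nseq k c.
Proof. by rewrite mem_nseq eq_sym => /negbTE ->; rewrite andbF. Qed.

Lemma rcons_eq_nseq (T : eqType) x (c e : T) n :
  rcons x c = nseq n e -> [/\ c = e, n = (size x).+1 & x = nseq (size x) e].
Proof.
move=> E; have := congr1 size E; rewrite size_rcons size_nseq => <-.
have : all (pred1 e) (rcons x c) by rewrite E all_nseq /= eqxx orbT.
by rewrite all_rcons => /andP [/eqP -> /all_pred1P].
Qed.

Definition ones_two_zeros a b : seq nat := nseq a 1 ++ 2 :: nseq b 0.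
Definition ones_zero_twos a b : seq nat := nseq a 1 ++ 0 :: nseq b 2.

Lemma ones_two_zeros_split a b x y :
  ones_two_zeros a b = x ++ 2 :: y -> x = nseq a 1 /\ y = nseq b 0.
Proof. by move=> E; apply: (eq_cat_cons_notin _ _ (esym E)); apply: notin_nseq. Qed.

Lemma ones_zero_twos_split a b x y :
  ones_zero_twos a b = x ++ 0 :: y -> x = nseq a 1 /\ y = nseq b 2.
Proof. by move=> E; apply: (eq_cat_cons_notin _ _ (esym E)); apply: notin_nseq. Qed.

Lemma hb_value_rcons w d : hb_value (rcons w d) = (hb_value w).*2 + d.
Proof. by rewrite /hb_value foldl_rcons. Qed.

Lemma hb_value_cat u v : hb_value (u ++ v) = hb_value u * 2 ^ size v + hb_value v.
Proof.
elim/last_ind: v => [|v d IH]; first by rewrite cats0 muln1 addn0.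
rewrite -rcons_cat !hb_value_rcons IH size_rcons expnS -!muln2; lia.
Qed.

Lemma hb_value_cons d v : hb_value (d :: v) = d * 2 ^ size v + hb_value v.
Proof. by rewrite -cat1s hb_value_cat. Qed.

Lemma hb_value_nseq1 k : hb_value (nseq k 1) = 2 ^ k - 1.
Proof.
elim: k => // k IH; rewrite -rcons_nseq hb_value_rcons IH expnS.
have : 0 < 2 ^ k by rewrite expn_gt0.
lia.
Qed.

Lemma hb_value_nseq0 k : hb_value (nseq k 0) = 0.
Proof. by elim: k => // k IH; rewrite -rcons_nseq hb_value_rcons IH. Qed.

Lemma hb_value_nseq2 k : hb_value (nseq k 2) = 2 ^ k.+1 - 2.
Proof.
elim: k => // k IH; rewrite -rcons_nseq hb_value_rcons IH !expnS.
have : 0 < 2 ^ k by rewrite expn_gt0.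
lia.
Qed.

Lemma hb_value_one_zeros k : hb_value (1 :: nseq k 0) = 2 ^ k.
Proof. by rewrite hb_value_cons hb_value_nseq0 size_nseq mul1n addn0. Qed.

Lemma hb_value_ones_two_zeros a b : hb_value (ones_two_zeros a b) = 2 ^ (a + b).+1.
Proof.
rewrite hb_value_cat hb_value_cons hb_value_nseq1 hb_value_nseq0 /=.
rewrite size_nseq addn0 !expnS expnD mulnBl mul1n.
have pa : 0 < 2 ^ a by rewrite expn_gt0.
have pb : 0 < 2 ^ b by rewrite expn_gt0.
nia.
Qed.

Lemma hb_value_ones_zero_twos a b : hb_value (ones_zero_twos a b) = 2 ^ (a + b).+1 - 2.
Proof.
rewrite hb_value_cat hb_value_cons hb_value_nseq1 hb_value_nseq2 /=.
rewrite size_nseq !expnS expnD mulnBl mul1n.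
have pa : 0 < 2 ^ a by rewrite expn_gt0.
have pb : 0 < 2 ^ b by rewrite expn_gt0.
nia.
Qed.

Lemma hyperbinary_nil n : ~ hyperbinary n [::].
Proof. by case. Qed.

Lemma hyperbinary_gt0 n w : hyperbinary n w -> 0 < n.
Proof.
case: w => [|d w] [_ /= d0 <-] //.
by rewrite hb_value_cons -lt0n in d0 *; rewrite ltn_addr // muln_gt0 d0 expn_gt0.
Qed.

Lemma hyperbinary_rcons n w d : hyperbinary n (rcons w d) ->
  d < 3 /\ (w = [::] /\ n = d \/ hyperbinary (hb_value w) w /\ n = (hb_value w).*2 + d).
Proof.
rewrite /hyperbinary all_rcons hb_value_rcons.
case: w => [|c w] [/andP [d3 allw] head_ne0 <-]; split=> //; first by left.
by right.
Qed.

Lemma all_lt3_nseq k d : d < 3 -> all (fun d => d < 3) (nseq k d).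
Proof. by move=> d3; rewrite all_nseq d3 orbT. Qed.

Lemma hyperbinary_one_zeros k : hyperbinary (2 ^ k) (1 :: nseq k 0).
Proof. by split; rewrite ?hb_value_one_zeros //= all_lt3_nseq. Qed.

Lemma hyperbinary_ones_two_zeros a b : hyperbinary (2 ^ (a + b).+1) (ones_two_zeros a b).
Proof.
split; last exact: hb_value_ones_two_zeros.
- by rewrite all_cat /= !all_lt3_nseq.
- by case: a.
Qed.

Lemma hyperbinary_nseq2 k : 0 < k -> hyperbinary (2 ^ k.+1 - 2) (nseq k 2).
Proof. by case: k => // k _; split; rewrite ?hb_value_nseq2 ?all_lt3_nseq. Qed.

Lemma hyperbinary_ones_zero_twos a b :
  hyperbinary (2 ^ (a.+1 + b).+1 - 2) (ones_zero_twos a.+1 b).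
Proof.
split=> //; last exact: hb_value_ones_zero_twos.
by rewrite all_cat /= !all_lt3_nseq.
Qed.

Lemma hyperbinary_pred_pow2 k w : hyperbinary (2 ^ k - 1) w -> w = nseq k 1.
Proof.
elim: k w => [|k IH] w H; first by have := hyperbinary_gt0 H.
case/lastP: w H => [/hyperbinary_nil //|w d] H.
rewrite expnS in H; have pos : 0 < 2 ^ k by rewrite expn_gt0.
have [d3 [[-> En]|[Hw En]]] := hyperbinary_rcons H.
  by case: k {IH H} pos En => [|k]; rewrite ?expnS => pos En; [rewrite -En | lia].
have [-> Ew] : d = 1 /\ hb_value w = 2 ^ k - 1 by lia.
by rewrite (IH w) ?rcons_nseq // -Ew.
Qed.

Lemma hyperbinary_pow2 m w : hyperbinary (2 ^ m) w ->
  (exists a b, a + b + 1 = m /\ w = ones_two_zeros a b) \/ w = 1 :: nseq m 0.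
Proof.
elim: m w => [|m IH] w H.
  by right; rewrite (@hyperbinary_pred_pow2 1 w H).
case/lastP: w H => [/hyperbinary_nil //|w d] H.
rewrite expnS in H; have pos : 0 < 2 ^ m by rewrite expn_gt0.
have [d3 [[-> En]|[Hw En]]] := hyperbinary_rcons H.
  have [-> ->] : m = 0 /\ d = 2 by case: m {IH H} pos En => [|m]; rewrite ?expnS; lia.
  by left; exists 0, 0.
have [[-> Ew]|[-> Ew]] : d = 0 /\ hb_value w = 2 ^ m \/ d = 2 /\ hb_value w = 2 ^ m - 1 by lia.
  rewrite Ew in Hw; case: (IH w Hw) => [[a [b [<- ->]]]|->].
    left; exists a, b.+1; split; first lia.
    by rewrite /ones_two_zeros rcons_cat rcons_cons rcons_nseq.
  by right; rewrite rcons_cons rcons_nseq.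
rewrite Ew in Hw; rewrite (hyperbinary_pred_pow2 Hw).
by left; exists m, 0; rewrite addn0 addn1 -cats1.
Qed.

Lemma hyperbinary_pow2_sub2 k w : hyperbinary (2 ^ k.+1 - 2) w ->
  w = nseq k 2 \/ exists a b, [/\ 0 < a, a + b = k & w = ones_zero_twos a b].
Proof.
elim: k w => [|k IH] w H; first by have := hyperbinary_gt0 H.
case/lastP: w H => [/hyperbinary_nil //|w d] H.
rewrite !expnS in H; have pos : 0 < 2 ^ k by rewrite expn_gt0.
have [d3 [[-> En]|[Hw En]]] := hyperbinary_rcons H.
  have [-> ->] : k = 0 /\ d = 2 by case: k {IH H} pos En => [|k]; rewrite ?expnS; lia.
  by left.
have [[-> Ew]|[-> Ew]] :
    d = 0 /\ hb_value w = 2 ^ k.+1 - 1 \/ d = 2 /\ hb_value w = 2 ^ k.+1 - 2.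
  by rewrite expnS; lia.
  rewrite Ew in Hw; rewrite (hyperbinary_pred_pow2 Hw).
  by right; exists k.+1, 0; rewrite addn0 -cats1.
rewrite Ew in Hw; case: (IH w Hw) => [->|[a [b [a0 <- ->]]]].
  by left; rewrite rcons_nseq.
right; exists a, b.+1; split=> //; first lia.
by rewrite /ones_zero_twos rcons_cat rcons_cons rcons_nseq.
Qed.

(* [arcA n l u v] unfolds to [[/\ hyperbinary n u, hyperbinary n v & hb_step l u v]]. *)
Definition hb_step (l : arc_label) (u v : seq nat) : Prop :=
  match l with
  | Arr => (exists x y : seq nat, u = x ++ [:: 0; 2] ++ y /\ v = x ++ [:: 1; 0] ++ y)
           \/ (exists y : seq nat, u = 2 :: y /\ v = [:: 1; 0] ++ y)
  | DArr => exists x y : seq nat, u = x ++ [:: 1; 2] ++ y /\ v = x ++ [:: 2; 0] ++ y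
  end.

Lemma hb_step_mem2 l u v : hb_step l u v -> 2 \in u.
Proof.
by case: l => [[[x [y [-> _]]]|[y [-> _]]]|[x [y [-> _]]]]; rewrite ?(mem_cat, inE) eqxx ?orbT.
Qed.

Lemma hb_step_one_zeros k l v : ~ hb_step l (1 :: nseq k 0) v.
Proof. by move/hb_step_mem2; rewrite inE mem_nseq andbF. Qed.

Lemma hb_step_ones_two_zeros a b l v :
  hb_step l (ones_two_zeros a b) v <->
  if a is a'.+1 then l = DArr /\ v = ones_two_zeros a' b.+1
  else l = Arr /\ v = 1 :: nseq b.+1 0.
Proof.
split.
- case: l => [[[x [y [Eu ->]]]|[y [Eu ->]]]|[x [y [Eu ->]]]].
  + move: Eu; rewrite /= -(cat_rcons 0).
    by case/ones_two_zeros_split => /rcons_eq_nseq [].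
  + by case: a Eu => [[<-]|].
  + move: Eu; rewrite /= -(cat_rcons 1).
    case/ones_two_zeros_split => /rcons_eq_nseq [_ -> ->] ->.
    by rewrite size_nseq.
- case: a => [|a] [-> ->]; first by right; exists (nseq b 0).
  exists (nseq a 1), (nseq b 0).
  by rewrite /ones_two_zeros -rcons_nseq cat_rcons.
Qed.

Lemma hb_step_twos k l v : hb_step l (nseq k.+1 2) v <-> l = Arr /\ v = ones_zero_twos 1 k.
Proof.
split; last by case=> -> ->; right; exists (nseq k 2).
have letter_in c x y : nseq k.+1 2 = x ++ [:: c, 2 & y] -> c = 2.
  move=> Eu; have : c \in x ++ [:: c, 2 & y] by rewrite mem_cat mem_head orbT.
  by rewrite -Eu mem_nseq => /eqP.
by case: l => [[[x [y [/letter_in //]]]|[y [[<-] ->]]]|[x [y [/letter_in //]]]].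
Qed.

Lemma ones_zero_twos_no_factor12 a b x y : ones_zero_twos a b != x ++ [:: 1, 2 & y].
Proof.
apply/eqP => E.
have : (0 \in x) || (0 \in y).
  have : 0 \in x ++ [:: 1, 2 & y] by rewrite -E mem_cat inE eqxx orbT.
  by rewrite mem_cat !inE.
case/orP => [x0|y0]; move: E.
  case/splitPr: x0 => x1 x2 E.
  rewrite -catA /= in E.
  have [_ E2] := ones_zero_twos_split E.
  have : 1 \in x2 ++ [:: 1, 2 & y] by rewrite mem_cat mem_head orbT.
  by rewrite E2 mem_nseq andbF.
case/splitPr: y0 => y1 y2 E.
rewrite -[[:: 1, 2 & _]]/([:: 1, 2 & y1] ++ _) catA in E.
have [E1 _] := ones_zero_twos_split E.
have : 2 \in x ++ [:: 1, 2 & y1] by rewrite mem_cat !inE eqxx !orbT.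
by rewrite E1 mem_nseq andbF.
Qed.

Lemma hb_step_ones_zero_twos a b l v :
  hb_step l (ones_zero_twos a.+1 b) v <->
  if b is b'.+1 then l = Arr /\ v = ones_zero_twos a.+2 b' else False.
Proof.
split.
- case: l => [[[x [y [Eu ->]]]|[y [Eu _]]]|[x [y [Eu _]]]] //.
  + have [-> E2] := ones_zero_twos_split Eu.
    case: b {Eu} E2 => [|b] // [->]; split=> //.
    by rewrite /= -cat_rcons rcons_nseq.
  + by move/eqP: Eu; rewrite (negbTE (ones_zero_twos_no_factor12 _ _ _ _)).
- case: b => [|b] // [-> ->]; left; exists (nseq a.+1 1), (nseq b 2); split=> //.
  by rewrite /= -cat_rcons rcons_nseq.
Qed.

Lemma A_is_pathP n vs ls :
  size vs = (size ls).+1 -> uniq vs -> (forall w, hyperbinary n w <-> w \in vs) ->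
  (forall i l v, i < size vs ->
     hb_step l (nth [::] vs i) v <->
     [/\ i < size ls, l = nth Arr ls i & v = nth [::] vs i.+1]) ->
  A_is_path n vs ls.
Proof.
move=> size_vs uniq_vs vertices steps; split=> // l u v; split.
- case=> /vertices u_vs _; rewrite -(nth_index [::] u_vs) => step_uv.
  have i_vs : index u vs < size vs by rewrite index_mem.
  have [i_ls -> ->] := (steps _ _ _ i_vs).1 step_uv.
  by exists (index u vs); rewrite ?nth_index.
- case=> i i_ls [-> -> ->].
  have i_vs : i < size vs by rewrite size_vs ltnW.
  split; [exact/vertices/mem_nth | apply/vertices/mem_nth; by rewrite size_vs |].
  exact: (steps _ _ _ i_vs).2.
Qed.

Definition pow2_path t := mkseq (fun i => ones_two_zeros (t - i) i) t.+1 ++ [:: 1 :: nseq t.+1 0].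
Definition pow2_labels t := nseq t DArr ++ [:: Arr].

Lemma nth_pow2_path t i : i < t.+2 ->
  nth [::] (pow2_path t) i = if i <= t then ones_two_zeros (t - i) i else 1 :: nseq t.+1 0.
Proof.
move=> i_lt; rewrite nth_cat size_mkseq ltnS; case: ifP => [i_le|_]; first exact: nth_mkseq.
by have -> : i - t.+1 = 0 by lia.
Qed.

Lemma nth_pow2_labels t i : nth Arr (pow2_labels t) i = if i < t then DArr else Arr.
Proof. by rewrite nth_cat size_nseq nth_nseq; case: ltnP => // _; case: (i - t) => [|[]]. Qed.

Lemma count0_ones_two_zeros a b : count_mem 0 (ones_two_zeros a b) = b.
Proof. by rewrite count_cat /= !count_nseq /= mul0n mul1n. Qed.

Lemma uniq_pow2_path t : uniq (pow2_path t).
Proof.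
apply: (@map_uniq _ _ (count_mem 0)).
have -> : map (count_mem 0) (pow2_path t) = iota 0 t.+2.
  rewrite map_cat -map_comp (eq_map (fun i => count0_ones_two_zeros (t - i) i)) map_id.
  by rewrite -[t.+2]addn1 iotaD /= count_nseq /= mul1n.
exact: iota_uniq.
Qed.

Lemma hyperbinary_pow2_path t w : hyperbinary (2 ^ t.+1) w <-> w \in pow2_path t.
Proof.
rewrite mem_cat mem_seq1; split.
- case/hyperbinary_pow2 => [[a [b [ab ->]]]|->]; last by rewrite eqxx orbT.
  apply/orP; left; apply/mapP; exists b; first by rewrite mem_iota; lia.
  by have -> : a = t - b by lia.
- case/orP => [/mapP [i] | /eqP ->]; last exact: hyperbinary_one_zeros.
  rewrite mem_iota => i_lt ->.
  by have := hyperbinary_ones_two_zeros (t - i) i; rewrite subnK //; lia.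
Qed.

Lemma hb_step_pow2_path t i l v : i < t.+2 ->
  hb_step l (nth [::] (pow2_path t) i) v <->
  [/\ i < t.+1, l = nth Arr (pow2_labels t) i & v = nth [::] (pow2_path t) i.+1].
Proof.
move=> i_lt; rewrite nth_pow2_path //; case: (leqP i t) => [i_le|]; last first.
  move=> t_lt; split=> [step | []]; first by case: (hb_step_one_zeros step).
  by rewrite ltnNge t_lt.
rewrite hb_step_ones_two_zeros nth_pow2_labels nth_pow2_path ?ltnS // i_le.
have [-> | i_lt_t] : i = t \/ i < t by lia.
  by rewrite subnn ltnn; split=> [[-> ->] | [_ -> ->]].
have -> : t - i = (t - i.+1).+1 by lia.
by rewrite i_lt_t; split=> [[-> ->] | [_ -> ->]].
Qed.

Lemma A_pow2 t : A_is_path (2 ^ t.+1) (pow2_path t) (pow2_labels t).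
Proof.
have size_path : size (pow2_path t) = t.+2 by rewrite size_cat size_mkseq addn1.
have size_labels : size (pow2_labels t) = t.+1 by rewrite size_cat size_nseq addn1.
apply: A_is_pathP; rewrite ?size_path ?size_labels //.
- exact: uniq_pow2_path.
- exact: hyperbinary_pow2_path.
- exact: hb_step_pow2_path.
Qed.

Definition twos_path t := nseq t 2 :: [seq ones_zero_twos i (t - i) | i <- iota 1 t].
Definition twos_labels t := nseq t Arr.

Lemma nth_twos_path t i : i <= t ->
  nth [::] (twos_path t) i = if i is 0 then nseq t 2 else ones_zero_twos i (t - i).
Proof. by case: i => [|i] //= i_lt; rewrite (nth_map 0) ?size_iota // nth_iota // add1n. Qed.

Lemma count1_ones_zero_twos a b : count_mem 1 (ones_zero_twos a b) = a.
Proof. by rewrite count_cat /= !count_nseq /= mul1n mul0n !addn0. Qed.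

Lemma uniq_twos_path t : uniq (twos_path t).
Proof.
apply: (@map_uniq _ _ (count_mem 1)).
have -> : map (count_mem 1) (twos_path t) = iota 0 t.+1.
  rewrite /= -map_comp (eq_map (fun i => count1_ones_zero_twos i (t - i))) map_id.
  by rewrite count_nseq mul0n.
exact: iota_uniq.
Qed.

Lemma hyperbinary_twos_path t w : 0 < t -> hyperbinary (2 ^ t.+1 - 2) w <-> w \in twos_path t.
Proof.
move=> t_gt0; rewrite inE; split.
- case/hyperbinary_pow2_sub2 => [->|[a [b [a_gt0 ab ->]]]]; first by rewrite eqxx.
  apply/orP; right; apply/mapP; exists a; first by rewrite mem_iota; lia.
  by have -> : b = t - a by lia.
- case/orP => [/eqP -> | /mapP [[|i]]]; first exact: hyperbinary_nseq2.
    by rewrite mem_iota.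
  rewrite mem_iota => i_lt ->.
  by have := hyperbinary_ones_zero_twos i (t - i.+1); rewrite subnKC //; lia.
Qed.

Lemma hb_step_twos_path t i l v : i < t.+1 ->
  hb_step l (nth [::] (twos_path t) i) v <->
  [/\ i < t, l = nth Arr (twos_labels t) i & v = nth [::] (twos_path t) i.+1].
Proof.
rewrite ltnS => i_le; rewrite nth_nseq if_same nth_twos_path //.
case: i i_le => [_ | i i_lt].
  case: t => [|t]; first by split=> [/hb_step_mem2 | []].
  by rewrite hb_step_twos nth_twos_path // subSS subn0; split=> [[-> ->] | [_ -> ->]].
rewrite hb_step_ones_zero_twos.
have [t_eq | i_lt_t] : t = i.+1 \/ i.+1 < t by lia.
  by rewrite t_eq subnn ltnn; split=> [|[]].
rewrite nth_twos_path // i_lt_t.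
have -> : t - i.+1 = (t - i.+2).+1 by lia.
by split=> [[-> ->] | [_ -> ->]].
Qed.

Lemma A_twos t : 0 < t -> A_is_path (2 ^ t.+1 - 2) (twos_path t) (twos_labels t).
Proof.
move=> t_gt0.
have size_path : size (twos_path t) = t.+1 by rewrite /= size_map size_iota.
apply: A_is_pathP; rewrite ?size_path ?size_nseq //.
- exact: uniq_twos_path.
- by move=> w; apply: hyperbinary_twos_path.
- exact: hb_step_twos_path.
Qed.

Theorem mainTheorem7 (t : nat) (ht : 1 <= t) :
  (forall n : nat, minimal_hyperbinary n (nseq t 1 ++ [:: 2]) ->
     A_is_path n
       ([seq nseq (t - i) 1 ++ 2 :: nseq i 0 | i <- iota 0 t.+1]
          ++ [:: 1 :: nseq t.+1 0])
       (nseq t DArr ++ [:: Arr]))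
  /\
  (forall n : nat, minimal_hyperbinary n (nseq t 2) ->
     A_is_path n
       (nseq t 2 :: [seq nseq i 1 ++ 0 :: nseq (t - i) 2 | i <- iota 1 t])
       (nseq t Arr)).
Proof.
split=> n [[_ _ <-] _].
- rewrite (hb_value_ones_two_zeros t 0) addn0.
  exact: A_pow2.
- rewrite hb_value_nseq2.
  exact: A_twos.
Qed.
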